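(* Let $0<c<\Gamma_0$ and $t>0$, and let $\mathcal D=\{(\tau,p):0<\tau<t,\ c<p<\Gamma_0\}$. Let $A$ be the cooperation area, regions V and VI, and $w_0,w_1,w_2,A_s,A_c$ be as defined in the context. - If the restriction of $A$ to region V attains its maximum at a point $(\tau^\star,p^\star)$ of region V, then $$A_c(\tau^\star,p^\star;w_1,1)-A_s(\tau^\star,p^\star;w_0,w_1)=1-2w_1+w_0.$$ - If the restriction of $A$ to region VI attains its maximum at a point $(\tau^\star,p^\star)$ of region VI, then $$A_s(\tau^\star,p^\star;w_2,1)-A_c(\tau^\star,p^\star;w_0,w_2)=1-2w_2+w_0.$$ In both cases $w_0,w_1,w_2$ are evaluated at $(\tau^\star,p^\star)$.
   Context: The client utility is linear: $\Gamma(d)=\Gamma_0(1-d)$. For $(\tau,p)\in\mathcal D$ write $s=\tau/t$ and, for $w\in(0,1]$, set $K(w)=1-(1-w)s$. Define $$d_s(w;\tau,p)=1-\frac{cK(w)}{wp},\qquad d_c(w;\tau,p)=1-\frac{p}{\Gamma_0K(w)}.$$ The cooperation area is $$A(\tau,p)=\int_0^1\max\{\min(d_s,d_c),0\}\,dw.$$ For $0\le x\le y\le1$, let $$A_s(\tau,p;x,y)=\int_x^y d_s(w;\tau,p)\,dw,\qquad A_c(\tau,p;x,y)=\int_x^y d_c(w;\tau,p)\,dw.$$ Define the thresholds $$w_0=\max\left\{\frac{c(t-\tau)}{pt-c\tau},\ \frac{pt-\Gamma_0(t-\tau)}{\Gamma_0\tau}\right\},$$ $$w_1=\left(\frac{p-\sqrt{p^2-4c\Gamma_0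 s(1-s)}}{2s\sqrt{c\Gamma_0}}\right)^2,\qquad w_2=\left(\frac{p+\sqrt{p^2-4c\Gamma_0 s(1-s)}}{2s\sqrt{c\Gamma_0}}\right)^2.$$ The regions (subsets of $\mathcal D$) are: - region V: $p^2\ge 4c\Gamma_0 s(1-s)$, $p<\Gamma_0(1-s)+cs$, and $p>\sqrt{c\Gamma_0}$; - region VI: $p^2\ge4c\Gamma_0 s(1-s)$, $p>\Gamma_0(1-s)+cs$, and $p<\sqrt{c\Gamma_0}$. *)

From Stdlib Require Import Reals.
From Coquelicot Require Import Coquelicot.
Open Scope R_scope.

Definition sr (t tau : R) : R := tau / t.

Definition Kf (t tau w : R) : R := 1 - (1 - w) * sr t tau.

Definition d_s (c t tau p w : R) : R := 1 - c * Kf t tau w / (w * p).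

Definition d_c (G0 t tau p w : R) : R := 1 - p / (G0 * Kf t tau w).

Definition coopA (c G0 t tau p : R) : R :=
  RInt (fun w => Rmax (Rmin (d_s c t tau p w) (d_c G0 t tau p w)) 0) 0 1.

Definition A_s (c t tau p x y : R) : R := RInt (fun w => d_s c t tau p w) x y.
Definition A_c (G0 t tau p x y : R) : R := RInt (fun w => d_c G0 t tau p w) x y.

Definition w0 (c G0 t tau p : R) : R :=
  Rmax (c * (t - tau) / (p * t - c * tau)) ((p * t - G0 * (t - tau)) / (G0 * tau)).

Definition disc (c G0 t tau p : R) : R :=
  p ^ 2 - 4 * c * G0 * sr t tau * (1 - sr t tau).

Definition w1 (c G0 t tau p : R) : R :=
  ((p - sqrt (disc c G0 t tau p)) / (2 * sr t tau * sqrt (c * G0))) ^ 2.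

Definition w2 (c G0 t tau p : R) : R :=
  ((p + sqrt (disc c G0 t tau p)) / (2 * sr t tau * sqrt (c * G0))) ^ 2.

Definition inD (c G0 t tau p : R) : Prop := 0 < tau < t /\ c < p < G0.

Definition regionV (c G0 t tau p : R) : Prop :=
  inD c G0 t tau p /\
  p ^ 2 >= 4 * c * G0 * sr t tau * (1 - sr t tau) /\
  p < G0 * (1 - sr t tau) + c * sr t tau /\
  p > sqrt (c * G0).

Definition regionVI (c G0 t tau p : R) : Prop :=
  inD c G0 t tau p /\
  p ^ 2 >= 4 * c * G0 * sr t tau * (1 - sr t tau) /\
  p > G0 * (1 - sr t tau) + c * sr t tau /\
  p < sqrt (c * G0).

(* For fixed tau, the integrand max(min(d_s, d_c), 0) of A changes form only at
   w0, the zero of d_s or of d_c, and at a root w1 or w2 of the quadratic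
   p^2 w - c Gamma_0 K(w)^2, which has the sign of d_s - d_c.  In region V it is
   0, d_s, d_c on [0, w0], [w0, w1], [w1, 1]; in region VI it is 0, d_c, d_s on
   [0, w0], [w0, w2], [w2, 1].  So A(tau, .) is a sum of two integrals with
   p-dependent endpoints, and its p-derivative vanishes at a maximum.  The moving
   endpoints contribute nothing, since the integrand is continuous across them,
   and p d/dp d_s = 1 - d_s, p d/dp d_c = d_c - 1 give
   p d/dp A_s(x, y) = (y - x) - A_s(x, y) and p d/dp A_c(x, y) = A_c(x, y) - (y - x). *)

From Pilot Require Import Defs.
From Stdlib Require Import Reals Lra Psatz.
From Coquelicot Require Import Coquelicot.
Open Scope R_scope.

Lemma four_mul_one_sub_le_1 (x : R) : 4 * x * (1 - x) <= 1.
Proof. pose proof (pow2_ge_0 (2 * x - 1)). nra. Qed.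

Lemma sqrt_lt_sqr (x y : R) : 0 <= x -> sqrt x < y -> x < y ^ 2.
Proof. intros Hx Hy. pose proof (sqrt_sqrt x Hx). pose proof (sqrt_pos x). nra. Qed.

Lemma sqr_lt_sqrt (x y : R) : 0 <= y -> y < sqrt x -> y ^ 2 < x.
Proof.
  intros Hy Hyx. destruct (Rle_or_lt 0 x) as [Hx | Hx].
  - pose proof (sqrt_sqrt x Hx). nra.
  - rewrite sqrt_neg_0 in Hyx by lra. lra.
Qed.

Lemma Rdiv_eq_0_num (x y : R) : y <> 0 -> x / y = 0 -> x = 0.
Proof. intros Hy H. replace x with (x / y * y) by (field; exact Hy). rewrite H. ring. Qed.

Lemma between_roots_iff (a b w : R) : a <= b -> (w - a) * (w - b) < 0 <-> a < w < b.
Proof.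
  intros Hab. split.
  - intros H. destruct (Rlt_or_le a w); destruct (Rlt_or_le w b); split; nra.
  - intros []. nra.
Qed.

Lemma outside_roots_iff (a b w : R) : a <= b -> 0 < (w - a) * (w - b) <-> w < a \/ b < w.
Proof.
  intros Hab. split.
  - intros H. destruct (Rlt_or_le w a); [left | right]; nra.
  - intros [|]; nra.
Qed.

Lemma quadratic_root_factor (k s q D m w : R) :
  m * m = k -> D * D = q ^ 2 - 4 * k * s * (1 - s) -> s <> 0 -> m <> 0 ->
  q ^ 2 * w - k * (1 - (1 - w) * s) ^ 2 =
  - k * s ^ 2 * (w - ((q - D) / (2 * s * m)) ^ 2) * (w - ((q + D) / (2 * s * m)) ^ 2).
Proof.
  intros Hm HD Hs Hm0.
  set (u := (q - D) / (2 * s * m)). set (v := (q + D) / (2 * s * m)).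
  assert (Hsum : u ^ 2 + v ^ 2 = (q ^ 2 + D * D) / (2 * s ^ 2 * (m * m)))
    by (unfold u, v; field; auto).
  assert (Hprod : u ^ 2 * v ^ 2 = ((q ^ 2 - D * D) / (4 * s ^ 2 * (m * m))) ^ 2)
    by (unfold u, v; field; auto).
  rewrite HD, Hm in Hsum, Hprod.
  replace (- k * s ^ 2 * (w - u ^ 2) * (w - v ^ 2))
    with (- k * s ^ 2 * (w ^ 2 - w * (u ^ 2 + v ^ 2) + u ^ 2 * v ^ 2)) by ring.
  rewrite Hsum, Hprod. field. split; auto. rewrite <- Hm. intro Hk.
  apply Hm0. nra.
Qed.

Lemma RInt_piecewise3 (f g h : R -> R) (l x y u : R) :
  l <= x -> x <= y -> y <= u ->
  (forall w, l < w < x -> f w = 0) ->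
  (forall w, x < w < y -> f w = g w) ->
  (forall w, y < w < u -> f w = h w) ->
  ex_RInt g x y -> ex_RInt h y u ->
  RInt f l u = RInt g x y + RInt h y u.
Proof.
  intros Hlx Hxy Hyu F0 F1 F2 Eg Eh.
  assert (agree : forall (k : R -> R) a b, a <= b -> (forall w, a < w < b -> f w = k w) ->
            forall w, Rmin a b < w < Rmax a b -> k w = f w).
  { intros k a b Hab Hk w Hw. rewrite Rmin_left, Rmax_right in Hw by lra.
    symmetry. apply Hk, Hw. }
  assert (E0 := agree (fun _ => 0) l x Hlx F0).
  assert (E1 := agree g x y Hxy F1).
  assert (E2 := agree h y u Hyu F2).
  assert (X0 : ex_RInt f l x) by (eapply ex_RInt_ext; [exact E0 | apply ex_RInt_const]).
  assert (X1 : ex_RInt f x y) by (eapply ex_RInt_ext; [exact E1 | exact Eg]).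
  assert (X2 : ex_RInt f y u) by (eapply ex_RInt_ext; [exact E2 | exact Eh]).
  rewrite <- (RInt_Chasles f l y u);
    [| apply (ex_RInt_Chasles f l x y); assumption | assumption].
  rewrite <- (RInt_Chasles f l x y) by assumption.
  rewrite <- (RInt_ext _ _ _ _ E0), <- (RInt_ext _ _ _ _ E1), <- (RInt_ext _ _ _ _ E2).
  rewrite RInt_const. unfold scal; simpl. unfold mult; simpl. unfold plus; simpl. ring.
Qed.

Lemma derive_0_at_interior_max (f : R -> R) (x l lo hi : R) :
  is_derive f x l -> lo < x < hi -> (forall y, lo < y < hi -> f y <= f x) -> l = 0.
Proof.
  intros Hd Hx Hmax. apply is_derive_Reals in Hd.
  exact (deriv_maximum f lo hi x (exist _ l Hd) (proj1 Hx) (proj2 Hx)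
           (fun y H1 H2 => Hmax y (conj H1 H2))).
Qed.

Lemma is_derive_value (f : R -> R) (x l l' : R) : is_derive f x l -> l = l' -> is_derive f x l'.
Proof. intros H <-. exact H. Qed.

Lemma is_derive_sub_add_sub (f1 f2 f3 f4 : R -> R) (x d1 d2 d3 d4 : R) :
  is_derive f1 x d1 -> is_derive f2 x d2 -> is_derive f3 x d3 -> is_derive f4 x d4 ->
  is_derive (fun r => f1 r - f2 r + (f3 r - f4 r)) x (d1 - d2 + (d3 - d4)).
Proof.
  intros H1 H2 H3 H4.
  exact (is_derive_plus _ _ _ _ _ (is_derive_minus _ _ _ _ _ H1 H2)
                                  (is_derive_minus _ _ _ _ _ H3 H4)).
Qed.

Lemma sr_bounds (t tau : R) : 0 < tau < t -> 0 < sr t tau < 1.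
Proof.
  intros Htau. unfold sr. split.
  - apply Rdiv_lt_0_compat; lra.
  - apply (Rdiv_lt_1 tau t); lra.
Qed.

Lemma Kf_pos (t tau w : R) : 0 < tau < t -> 0 < w -> 0 < Kf t tau w.
Proof. intros Htau Hw. pose proof (sr_bounds t tau Htau). unfold Kf. nra. Qed.

Definition prim_s (c t tau p w : R) : R :=
  w - c / p * ((1 - sr t tau) * ln w + sr t tau * w).

Definition prim_c (G0 t tau p w : R) : R :=
  w - p / (G0 * sr t tau) * ln (Kf t tau w).

Lemma is_RInt_d_s (c t tau p x y : R) :
  0 < x -> x <= y -> p <> 0 ->
  is_RInt (d_s c t tau p) x y (prim_s c t tau p y - prim_s c t tau p x).
Proof.
  intros Hx Hxy Hp.
  apply (is_RInt_derive (prim_s c t tau p)); intros w Hw;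
    rewrite Rmin_left in Hw by lra.
  - unfold prim_s. auto_derive; [lra|]. unfold d_s, Kf. field. lra.
  - unfold d_s, Kf. apply (ex_derive_continuous (V := R_NormedModule)). auto_derive.
    apply Rmult_integral_contrapositive; lra.
Qed.

Lemma is_RInt_d_c (G0 t tau p x y : R) :
  0 < tau < t -> 0 < G0 -> 0 < x -> x <= y ->
  is_RInt (d_c G0 t tau p) x y (prim_c G0 t tau p y - prim_c G0 t tau p x).
Proof.
  intros Htau HG Hx Hxy. pose proof (sr_bounds t tau Htau).
  apply (is_RInt_derive (prim_c G0 t tau p)); intros w Hw;
    rewrite Rmin_left in Hw by lra; pose proof (Kf_pos t tau w Htau ltac:(lra)) as HK;
    unfold Kf in HK.
  - unfold prim_c, Kf. auto_derive; [lra|]. unfold d_c, Kf. field. lra.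
  - unfold d_c, Kf. apply (ex_derive_continuous (V := R_NormedModule)). auto_derive.
    apply Rmult_integral_contrapositive; lra.
Qed.

Lemma A_s_prim (c t tau p x y : R) :
  0 < x -> x <= y -> p <> 0 ->
  A_s c t tau p x y = prim_s c t tau p y - prim_s c t tau p x.
Proof. intros. apply is_RInt_unique, is_RInt_d_s; assumption. Qed.

Lemma A_c_prim (G0 t tau p x y : R) :
  0 < tau < t -> 0 < G0 -> 0 < x -> x <= y ->
  A_c G0 t tau p x y = prim_c G0 t tau p y - prim_c G0 t tau p x.
Proof. intros. apply is_RInt_unique, is_RInt_d_c; assumption. Qed.

Lemma is_derive_prim_s (c t tau q : R) (x : R -> R) :
  0 < q -> 0 < x q -> ex_derive x q ->
  is_derive (fun r => prim_s c t tau r (x r)) q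
    ((x q - prim_s c t tau q (x q)) / q + Derive x q * d_s c t tau q (x q)).
Proof.
  intros Hq Hx Dx. unfold prim_s. auto_derive.
  - repeat split; auto; lra.
  - change (fun r => x r) with x. unfold d_s, Kf. field. lra.
Qed.

Lemma is_derive_prim_c (G0 t tau q : R) (x : R -> R) :
  0 < tau < t -> 0 < G0 -> 0 < q -> 0 < x q -> ex_derive x q ->
  is_derive (fun r => prim_c G0 t tau r (x r)) q
    ((prim_c G0 t tau q (x q) - x q) / q + Derive x q * d_c G0 t tau q (x q)).
Proof.
  intros Htau HG Hq Hx Dx. pose proof (sr_bounds t tau Htau).
  pose proof (Kf_pos t tau (x q) Htau Hx) as HK. unfold prim_c, Kf in *. auto_derive.
  - repeat split; auto; lra.
  - change (fun r => x r) with x. unfold d_c, Kf, Rminus in *. field. lra.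
Qed.

(* The zeros in w of d_s and d_c; w0 of Defs is by definition [Rmax zero_s zero_c]. *)
Definition zero_s (c t tau p : R) : R := c * (t - tau) / (p * t - c * tau).

Definition zero_c (G0 t tau p : R) : R := (p * t - G0 * (t - tau)) / (G0 * tau).

(* d_s - d_c has the sign of this quadratic in w, whose roots are w1 <= w2. *)
Definition crossing_poly (c G0 t tau p w : R) : R := p ^ 2 * w - c * G0 * Kf t tau w ^ 2.

Definition areaV (c G0 t tau p : R) : R :=
  prim_s c t tau p (w1 c G0 t tau p) - prim_s c t tau p (zero_s c t tau p)
  + (prim_c G0 t tau p 1 - prim_c G0 t tau p (w1 c G0 t tau p)).

Definition areaVI (c G0 t tau p : R) : R :=
  prim_c G0 t tau p (w2 c G0 t tau p) - prim_c G0 t tau p (zero_c G0 t tau p)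
  + (prim_s c t tau p 1 - prim_s c t tau p (w2 c G0 t tau p)).

Lemma ex_derive_zero_c (G0 t tau p : R) : ex_derive (fun r => zero_c G0 t tau r) p.
Proof. unfold zero_c. auto_derive. exact I. Qed.

Section Cooperation.

Variables c G0 t tau p : R.
Hypotheses (hc : 0 < c) (hcG : c < G0).

Section Domain.

Hypothesis hD : inD c G0 t tau p.
Let htau : 0 < tau < t := proj1 hD.
Let hcp : c < p := proj1 (proj2 hD).
Let hpG : p < G0 := proj2 (proj2 hD).
Let hs : 0 < sr t tau < 1 := sr_bounds t tau htau.

Lemma zero_s_bounds : 0 < zero_s c t tau p < 1.
Proof.
  unfold zero_s. split.
  - apply Rdiv_lt_0_compat; nra.
  - apply (Rdiv_lt_1 (c * (t - tau))); nra.
Qed.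

Lemma zero_c_lt_1 : zero_c G0 t tau p < 1.
Proof. unfold zero_c. apply (Rdiv_lt_1 (p * t - G0 * (t - tau))); nra. Qed.

Lemma d_s_factor (w : R) : 0 < w ->
  d_s c t tau p w = (p - c * sr t tau) * (w - zero_s c t tau p) / (w * p).
Proof. intros. unfold d_s, Kf, zero_s, sr. field. repeat split; nra. Qed.

Lemma d_c_factor (w : R) : 0 < w ->
  d_c G0 t tau p w = sr t tau * (w - zero_c G0 t tau p) / Kf t tau w.
Proof.
  intros Hw. unfold d_c.
  replace (Kf t tau w) with ((t - tau + w * tau) / t) by (unfold Kf, sr; field; lra).
  unfold zero_c, sr. field. repeat split; nra.
Qed.

Lemma d_s_zero_s : d_s c t tau p (zero_s c t tau p) = 0.
Proof.
  rewrite d_s_factor by apply zero_s_bounds. rewrite Rminus_diag. unfold Rdiv. ring.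
Qed.

Lemma d_c_zero_c : 0 < zero_c G0 t tau p -> d_c G0 t tau p (zero_c G0 t tau p) = 0.
Proof. intros Hz. rewrite d_c_factor by exact Hz. rewrite Rminus_diag. unfold Rdiv. ring. Qed.

Lemma d_s_lt_0 (w : R) : 0 < w < zero_s c t tau p -> d_s c t tau p w < 0.
Proof.
  intros Hw. rewrite d_s_factor by lra.
  apply Rdiv_neg_pos; [apply Rmult_pos_neg|]; nra.
Qed.

Lemma d_s_gt_0 (w : R) : zero_s c t tau p < w -> 0 < d_s c t tau p w.
Proof.
  intros Hw. pose proof zero_s_bounds. pose proof hs.
  assert (0 < p - c * sr t tau) by nra.
  rewrite d_s_factor by lra. apply Rdiv_lt_0_compat; nra.
Qed.

Lemma d_c_lt_0 (w : R) : 0 < w < zero_c G0 t tau p -> d_c G0 t tau p w < 0.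
Proof.
  intros Hw. pose proof (Kf_pos t tau w htau ltac:(lra)). rewrite d_c_factor by lra.
  apply Rdiv_neg_pos; nra.
Qed.

Lemma d_c_gt_0 (w : R) : 0 < w -> zero_c G0 t tau p < w -> 0 < d_c G0 t tau p w.
Proof.
  intros Hw Hcw. pose proof (Kf_pos t tau w htau Hw). rewrite d_c_factor by lra.
  apply Rdiv_lt_0_compat; nra.
Qed.

Lemma d_s_sub_d_c (w : R) : 0 < w ->
  d_s c t tau p w - d_c G0 t tau p w =
  crossing_poly c G0 t tau p w / (G0 * Kf t tau w * w * p).
Proof.
  intros Hw. pose proof (Kf_pos t tau w htau Hw).
  unfold d_s, d_c, crossing_poly. field. repeat split; lra.
Qed.

Lemma d_s_lt_d_c (w : R) :
  0 < w -> crossing_poly c G0 t tau p w < 0 -> d_s c t tau p w < d_c G0 t tau p w.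
Proof.
  intros Hw Hh. pose proof (Kf_pos t tau w htau Hw).
  apply Rminus_lt. rewrite d_s_sub_d_c by lra.
  apply Rdiv_neg_pos; [lra|]. repeat apply Rmult_lt_0_compat; lra.
Qed.

Lemma d_c_lt_d_s (w : R) :
  0 < w -> 0 < crossing_poly c G0 t tau p w -> d_c G0 t tau p w < d_s c t tau p w.
Proof.
  intros Hw Hh. pose proof (Kf_pos t tau w htau Hw).
  apply Rminus_gt. rewrite d_s_sub_d_c by lra.
  apply Rdiv_lt_0_compat; [lra|]. repeat apply Rmult_lt_0_compat; lra.
Qed.

Lemma d_s_eq_d_c (w : R) :
  0 < w -> crossing_poly c G0 t tau p w = 0 -> d_s c t tau p w = d_c G0 t tau p w.
Proof.
  intros Hw Hh. apply Rminus_diag_uniq. rewrite d_s_sub_d_c, Hh by lra. apply Rdiv_0_l.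
Qed.

(* Written [Defs.disc] because Coquelicot also exports a [disc]. *)
Lemma crossing_poly_factor (w : R) : 0 <= Defs.disc c G0 t tau p ->
  crossing_poly c G0 t tau p w =
  - (c * G0) * sr t tau ^ 2 * (w - w1 c G0 t tau p) * (w - w2 c G0 t tau p).
Proof.
  intros Hd. unfold crossing_poly, Kf, w1, w2.
  apply quadratic_root_factor; try lra.
  - apply sqrt_sqrt. nra.
  - rewrite sqrt_sqrt by lra. unfold Defs.disc. ring.
  - apply Rgt_not_eq, sqrt_lt_R0. nra.
Qed.

Lemma w1_le_w2 : 0 <= Defs.disc c G0 t tau p -> w1 c G0 t tau p <= w2 c G0 t tau p.
Proof.
  intros Hd. unfold w1, w2.
  assert (0 < sqrt (c * G0)) by (apply sqrt_lt_R0; nra).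
  assert (Hm : 0 < 2 * sr t tau * sqrt (c * G0)) by (pose proof hs; nra).
  assert (HR := sqrt_sqrt _ Hd). pose proof (sqrt_pos (Defs.disc c G0 t tau p)).
  assert (0 <= c * G0 * sr t tau * (1 - sr t tau))
    by (pose proof hs; assert (0 < c * G0) by nra; apply Rmult_le_pos; [apply Rmult_le_pos|]; lra).
  assert (HDp : sqrt (Defs.disc c G0 t tau p) <= p).
  { apply Rnot_lt_le. intro Hlt. assert (p * p < Defs.disc c G0 t tau p) by nra.
    unfold Defs.disc in *. nra. }
  apply pow_incr. split.
  - apply Rdiv_le_0_compat; lra.
  - apply Rmult_le_compat_r; [apply Rlt_le, Rinv_0_lt_compat|]; lra.
Qed.

Let hcGs : 0 < c * G0 * sr t tau ^ 2.
Proof. pose proof hs. apply Rmult_lt_0_compat; [nra | apply pow_lt; lra]. Qed.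

Lemma crossing_poly_pos_iff (w : R) : 0 <= Defs.disc c G0 t tau p ->
  0 < crossing_poly c G0 t tau p w <-> w1 c G0 t tau p < w < w2 c G0 t tau p.
Proof.
  intros Hd.
  rewrite <- (between_roots_iff _ _ w (w1_le_w2 Hd)), crossing_poly_factor by exact Hd.
  split; intros; nra.
Qed.

Lemma crossing_poly_neg_iff (w : R) : 0 <= Defs.disc c G0 t tau p ->
  crossing_poly c G0 t tau p w < 0 <-> w < w1 c G0 t tau p \/ w2 c G0 t tau p < w.
Proof.
  intros Hd.
  rewrite <- (outside_roots_iff _ _ w (w1_le_w2 Hd)), crossing_poly_factor by exact Hd.
  split; intros; nra.
Qed.

Lemma crossing_poly_w1 :
  0 <= Defs.disc c G0 t tau p -> crossing_poly c G0 t tau p (w1 c G0 t tau p) = 0.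
Proof. intros Hd. rewrite crossing_poly_factor by exact Hd. ring. Qed.

Lemma crossing_poly_w2 :
  0 <= Defs.disc c G0 t tau p -> crossing_poly c G0 t tau p (w2 c G0 t tau p) = 0.
Proof. intros Hd. rewrite crossing_poly_factor by exact Hd. ring. Qed.

Lemma crossing_poly_zero_s :
  crossing_poly c G0 t tau p (zero_s c t tau p) =
  p ^ 2 * zero_s c t tau p * (c - G0 * zero_s c t tau p) / c.
Proof. unfold crossing_poly, Kf, zero_s, sr. field. repeat split; nra. Qed.

Lemma crossing_poly_zero_c :
  crossing_poly c G0 t tau p (zero_c G0 t tau p) = p ^ 2 * (G0 * zero_c G0 t tau p - c) / G0.
Proof. unfold crossing_poly, Kf, zero_c, sr. field. repeat split; nra. Qed.

Lemma G0_zero_s_sub_c :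
  G0 * zero_s c t tau p - c =
  c * (G0 * (1 - sr t tau) + c * sr t tau - p) / (p - c * sr t tau).
Proof.
  pose proof hs. assert (0 < p - c * sr t tau) by nra.
  unfold zero_s, sr in *. field. repeat split; nra.
Qed.

Lemma G0_zero_c_sub_c :
  G0 * zero_c G0 t tau p - c = (p - (G0 * (1 - sr t tau) + c * sr t tau)) / sr t tau.
Proof. unfold zero_c, sr. field. repeat split; nra. Qed.

Lemma ex_derive_zero_s : ex_derive (fun r => zero_s c t tau r) p.
Proof. unfold zero_s. auto_derive. nra. Qed.

Lemma ex_derive_w1 : 0 < Defs.disc c G0 t tau p -> ex_derive (fun r => w1 c G0 t tau r) p.
Proof.
  intros Hd. assert (0 < sqrt (c * G0)) by (apply sqrt_lt_R0; nra). pose proof hs.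
  unfold w1, Defs.disc in *. auto_derive. repeat split; nra.
Qed.

Lemma ex_derive_w2 : 0 < Defs.disc c G0 t tau p -> ex_derive (fun r => w2 c G0 t tau r) p.
Proof.
  intros Hd. assert (0 < sqrt (c * G0)) by (apply sqrt_lt_R0; nra). pose proof hs.
  unfold w2, Defs.disc in *. auto_derive. repeat split; nra.
Qed.

End Domain.

Section RegionV.

Hypothesis hV : regionV c G0 t tau p.
Let hD : inD c G0 t tau p := proj1 hV.
Let hs : 0 < sr t tau < 1 := sr_bounds t tau (proj1 hD).
Let hlt : p < G0 * (1 - sr t tau) + c * sr t tau := proj1 (proj2 (proj2 hV)).
Let hcGp : c * G0 < p ^ 2 :=
  sqrt_lt_sqr (c * G0) p ltac:(nra) (proj2 (proj2 (proj2 hV))).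

Let hdisc : 0 < Defs.disc c G0 t tau p.
Proof.
  pose proof (four_mul_one_sub_le_1 (sr t tau)). assert (0 < c * G0) by nra.
  unfold Defs.disc. nra.
Qed.

Lemma regionV_order :
  zero_c G0 t tau p < zero_s c t tau p /\ zero_s c t tau p < w1 c G0 t tau p /\
  w1 c G0 t tau p < 1 < w2 c G0 t tau p.
Proof.
  pose proof (zero_s_bounds hD). pose proof hs. pose proof (proj2 hD).
  assert (Hw : w1 c G0 t tau p < 1 < w2 c G0 t tau p).
  { apply crossing_poly_pos_iff; [exact hD | lra |].
    replace (crossing_poly c G0 t tau p 1) with (p ^ 2 - c * G0)
      by (unfold crossing_poly, Kf; ring).
    lra. }
  assert (Hzs : c < G0 * zero_s c t tau p).
  { apply Rminus_gt. rewrite (G0_zero_s_sub_c hD).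
    apply Rdiv_lt_0_compat; [apply Rmult_lt_0_compat |]; nra. }
  assert (Hzc : G0 * zero_c G0 t tau p < c).
  { apply Rminus_lt. rewrite (G0_zero_c_sub_c hD). apply Rdiv_neg_pos; lra. }
  assert (Hh : crossing_poly c G0 t tau p (zero_s c t tau p) < 0).
  { rewrite (crossing_poly_zero_s hD). apply Rdiv_neg_pos; [|lra].
    apply Rmult_pos_neg; [apply Rmult_lt_0_compat|]; nra. }
  apply (crossing_poly_neg_iff hD) in Hh; [|lra].
  repeat split; nra.
Qed.

Lemma w0_regionV : w0 c G0 t tau p = zero_s c t tau p.
Proof.
  change (Rmax (zero_s c t tau p) (zero_c G0 t tau p) = zero_s c t tau p).
  apply Rmax_left. pose proof regionV_order. lra.
Qed.

Lemma coopA_regionV :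
  coopA c G0 t tau p =
  A_s c t tau p (zero_s c t tau p) (w1 c G0 t tau p) + A_c G0 t tau p (w1 c G0 t tau p) 1.
Proof.
  pose proof (zero_s_bounds hD). pose proof regionV_order. pose proof hD as [? ?].
  apply RInt_piecewise3; try lra.
  - intros w Hw. apply Rmax_right. pose proof (Rmin_l (d_s c t tau p w) (d_c G0 t tau p w)).
    pose proof (d_s_lt_0 hD w Hw). lra.
  - intros w Hw. assert (d_s c t tau p w < d_c G0 t tau p w).
    { apply (d_s_lt_d_c hD); [lra|]. apply (crossing_poly_neg_iff hD); lra. }
    pose proof (d_s_gt_0 hD w (proj1 Hw)).
    rewrite Rmin_left by lra. apply Rmax_left. lra.
  - intros w Hw. assert (d_c G0 t tau p w < d_s c t tau p w).
    { apply (d_c_lt_d_s hD); [lra|]. apply (crossing_poly_pos_iff hD); lra. }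
    pose proof (d_c_gt_0 hD w ltac:(lra) ltac:(lra)).
    rewrite Rmin_right by lra. apply Rmax_left. lra.
  - eexists. apply is_RInt_d_s; lra.
  - eexists. apply is_RInt_d_c; lra.
Qed.

Lemma coopA_eq_areaV : coopA c G0 t tau p = areaV c G0 t tau p.
Proof.
  pose proof (zero_s_bounds hD). pose proof regionV_order. pose proof hD as [? ?].
  rewrite coopA_regionV, A_s_prim, A_c_prim by lra. unfold areaV. ring.
Qed.

Lemma is_derive_areaV :
  is_derive (fun r => areaV c G0 t tau r) p
    ((A_c G0 t tau p (w1 c G0 t tau p) 1 - A_s c t tau p (w0 c G0 t tau p) (w1 c G0 t tau p)
      - (1 - 2 * w1 c G0 t tau p + w0 c G0 t tau p)) / p).
Proof.
  pose proof (zero_s_bounds hD). pose proof regionV_order. pose proof hD as [? ?].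
  rewrite w0_regionV, A_s_prim, A_c_prim by lra.
  assert (Hw1 := is_derive_prim_s c t tau p (fun r => w1 c G0 t tau r)
                   ltac:(lra) ltac:(lra) (ex_derive_w1 hD hdisc)).
  assert (Hzs := is_derive_prim_s c t tau p (fun r => zero_s c t tau r)
                   ltac:(lra) ltac:(lra) (ex_derive_zero_s hD)).
  assert (Hone := is_derive_prim_c G0 t tau p (fun _ => 1)
                  ltac:(lra) ltac:(lra) ltac:(lra) ltac:(lra) (ex_derive_const _ _)).
  assert (Hw1' := is_derive_prim_c G0 t tau p (fun r => w1 c G0 t tau r)
                    ltac:(lra) ltac:(lra) ltac:(lra) ltac:(lra) (ex_derive_w1 hD hdisc)).
  eapply is_derive_value;
    [exact (is_derive_sub_add_sub _ _ _ _ _ _ _ _ _ Hw1 Hzs Hone Hw1') |].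
  rewrite Derive_const, (d_s_zero_s hD), (d_s_eq_d_c hD (w1 c G0 t tau p))
    by (try apply (crossing_poly_w1 hD); lra).
  field. lra.
Qed.

Lemma regionV_open :
  exists lo hi, lo < p < hi /\ forall y, lo < y < hi -> regionV c G0 t tau y.
Proof.
  pose proof hV as [[Htau _] [_ [_ Hp]]]. pose proof hs.
  assert (Hc : c < sqrt (c * G0)).
  { rewrite <- (sqrt_square c) at 1 by lra. apply sqrt_lt_1_alt. nra. }
  exists (sqrt (c * G0)), (Rmin G0 (G0 * (1 - sr t tau) + c * sr t tau)). split.
  - split; [exact Hp |]. apply Rmin_glb_lt; [exact (proj2 (proj2 hD)) | exact hlt].
  - intros y [Hy1 Hy2].
    pose proof (Rmin_l G0 (G0 * (1 - sr t tau) + c * sr t tau)).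
    pose proof (Rmin_r G0 (G0 * (1 - sr t tau) + c * sr t tau)).
    assert (c * G0 < y ^ 2) by (apply sqrt_lt_sqr; nra).
    pose proof (four_mul_one_sub_le_1 (sr t tau)).
    assert (0 < c * G0) by nra.
    repeat split; try lra. nra.
Qed.

End RegionV.

Section RegionVI.

Hypothesis hVI : regionVI c G0 t tau p.
Let hD : inD c G0 t tau p := proj1 hVI.
Let hs : 0 < sr t tau < 1 := sr_bounds t tau (proj1 hD).
Let hgt : G0 * (1 - sr t tau) + c * sr t tau < p := proj1 (proj2 (proj2 hVI)).
Let hpcG : p ^ 2 < c * G0 :=
  sqr_lt_sqrt (c * G0) p ltac:(nra) (proj2 (proj2 (proj2 hVI))).

Let hdisc : 0 < Defs.disc c G0 t tau p.
Proof.
  pose proof hs. pose proof (pow2_ge_0 (G0 * (1 - sr t tau) - c * sr t tau)).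
  assert (0 < G0 * (1 - sr t tau) + c * sr t tau) by nra.
  unfold Defs.disc. nra.
Qed.

Lemma regionVI_order :
  zero_s c t tau p < zero_c G0 t tau p /\ 0 < zero_c G0 t tau p /\
  w1 c G0 t tau p < zero_c G0 t tau p /\ zero_c G0 t tau p < w2 c G0 t tau p /\
  w2 c G0 t tau p < 1.
Proof.
  pose proof (zero_s_bounds hD). pose proof (zero_c_lt_1 hD).
  pose proof hs. pose proof (proj2 hD).
  assert (Hw : 1 < w1 c G0 t tau p \/ w2 c G0 t tau p < 1).
  { apply (crossing_poly_neg_iff hD); [lra |].
    replace (crossing_poly c G0 t tau p 1) with (p ^ 2 - c * G0)
      by (unfold crossing_poly, Kf; ring).
    lra. }
  assert (Hzc : c < G0 * zero_c G0 t tau p).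
  { apply Rminus_gt. rewrite (G0_zero_c_sub_c hD). apply Rdiv_lt_0_compat; lra. }
  assert (Hzs : G0 * zero_s c t tau p < c).
  { apply Rminus_lt. rewrite (G0_zero_s_sub_c hD).
    apply Rdiv_neg_pos; [apply Rmult_pos_neg |]; nra. }
  assert (Hh : 0 < crossing_poly c G0 t tau p (zero_c G0 t tau p)).
  { rewrite (crossing_poly_zero_c hD).
    apply Rdiv_lt_0_compat; [apply Rmult_lt_0_compat |]; nra. }
  apply (crossing_poly_pos_iff hD) in Hh; [|lra].
  repeat split; nra.
Qed.

Lemma w0_regionVI : w0 c G0 t tau p = zero_c G0 t tau p.
Proof.
  change (Rmax (zero_s c t tau p) (zero_c G0 t tau p) = zero_c G0 t tau p).
  apply Rmax_right. pose proof regionVI_order. lra.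
Qed.

Lemma coopA_regionVI :
  coopA c G0 t tau p =
  A_c G0 t tau p (zero_c G0 t tau p) (w2 c G0 t tau p) + A_s c t tau p (w2 c G0 t tau p) 1.
Proof.
  pose proof regionVI_order. pose proof hD as [? ?].
  apply RInt_piecewise3; try lra.
  - intros w Hw. apply Rmax_right. pose proof (Rmin_r (d_s c t tau p w) (d_c G0 t tau p w)).
    pose proof (d_c_lt_0 hD w Hw). lra.
  - intros w Hw. assert (d_c G0 t tau p w < d_s c t tau p w).
    { apply (d_c_lt_d_s hD); [lra|]. apply (crossing_poly_pos_iff hD); lra. }
    pose proof (d_c_gt_0 hD w ltac:(lra) ltac:(lra)).
    rewrite Rmin_right by lra. apply Rmax_left. lra.
  - intros w Hw. assert (d_s c t tau p w < d_c G0 t tau p w).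
    { apply (d_s_lt_d_c hD); [lra|]. apply (crossing_poly_neg_iff hD); lra. }
    pose proof (d_s_gt_0 hD w ltac:(lra)).
    rewrite Rmin_left by lra. apply Rmax_left. lra.
  - eexists. apply is_RInt_d_c; lra.
  - eexists. apply is_RInt_d_s; lra.
Qed.

Lemma coopA_eq_areaVI : coopA c G0 t tau p = areaVI c G0 t tau p.
Proof.
  pose proof regionVI_order. pose proof hD as [? ?].
  rewrite coopA_regionVI, A_s_prim, A_c_prim by lra. unfold areaVI. ring.
Qed.

Lemma is_derive_areaVI :
  is_derive (fun r => areaVI c G0 t tau r) p
    ((A_c G0 t tau p (w0 c G0 t tau p) (w2 c G0 t tau p) - A_s c t tau p (w2 c G0 t tau p) 1
      + (1 - 2 * w2 c G0 t tau p + w0 c G0 t tau p)) / p).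
Proof.
  pose proof regionVI_order. pose proof hD as [? ?].
  rewrite w0_regionVI, A_s_prim, A_c_prim by lra.
  assert (Hw2 := is_derive_prim_c G0 t tau p (fun r => w2 c G0 t tau r)
                   ltac:(lra) ltac:(lra) ltac:(lra) ltac:(lra) (ex_derive_w2 hD hdisc)).
  assert (Hzc := is_derive_prim_c G0 t tau p (fun r => zero_c G0 t tau r)
                   ltac:(lra) ltac:(lra) ltac:(lra) ltac:(lra) (ex_derive_zero_c G0 t tau p)).
  assert (Hone := is_derive_prim_s c t tau p (fun _ => 1)
                   ltac:(lra) ltac:(lra) (ex_derive_const _ _)).
  assert (Hw2' := is_derive_prim_s c t tau p (fun r => w2 c G0 t tau r)
                    ltac:(lra) ltac:(lra) (ex_derive_w2 hD hdisc)).
  eapply is_derive_value;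
    [exact (is_derive_sub_add_sub _ _ _ _ _ _ _ _ _ Hw2 Hzc Hone Hw2') |].
  rewrite Derive_const, (d_c_zero_c hD), (d_s_eq_d_c hD (w2 c G0 t tau p))
    by (try apply (crossing_poly_w2 hD); lra).
  field. lra.
Qed.

Lemma regionVI_open :
  exists lo hi, lo < p < hi /\ forall y, lo < y < hi -> regionVI c G0 t tau y.
Proof.
  pose proof hVI as [[Htau _] [_ [_ Hp]]]. pose proof hs.
  assert (HG : sqrt (c * G0) < G0).
  { rewrite <- (sqrt_square G0) at 2 by lra. apply sqrt_lt_1_alt. nra. }
  exists (Rmax c (G0 * (1 - sr t tau) + c * sr t tau)), (sqrt (c * G0)). split.
  - split; [| exact Hp]. apply Rmax_lub_lt; [exact (proj1 (proj2 hD)) | exact hgt].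
  - intros y [Hy1 Hy2].
    pose proof (Rmax_l c (G0 * (1 - sr t tau) + c * sr t tau)).
    pose proof (Rmax_r c (G0 * (1 - sr t tau) + c * sr t tau)).
    pose proof (pow2_ge_0 (G0 * (1 - sr t tau) - c * sr t tau)).
    assert (0 < G0 * (1 - sr t tau) + c * sr t tau) by nra.
    repeat split; try lra. nra.
Qed.

End RegionVI.

End Cooperation.

Theorem proposition3 (c G0 t : R) (hc : 0 < c) (hcG : c < G0) (ht : 0 < t) :
  (forall taus ps : R,
     regionV c G0 t taus ps ->
     (forall tau p, regionV c G0 t tau p -> coopA c G0 t tau p <= coopA c G0 t taus ps) ->
     A_c G0 t taus ps (w1 c G0 t taus ps) 1 - A_s c t taus ps (w0 c G0 t taus ps) (w1 c G0 t taus ps)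
       = 1 - 2 * w1 c G0 t taus ps + w0 c G0 t taus ps)
  /\
  (forall taus ps : R,
     regionVI c G0 t taus ps ->
     (forall tau p, regionVI c G0 t tau p -> coopA c G0 t tau p <= coopA c G0 t taus ps) ->
     A_s c t taus ps (w2 c G0 t taus ps) 1 - A_c G0 t taus ps (w0 c G0 t taus ps) (w2 c G0 t taus ps)
       = 1 - 2 * w2 c G0 t taus ps + w0 c G0 t taus ps).
Proof.
  split; intros taus ps Hreg Hmax; pose proof (proj1 (proj2 (proj1 Hreg))) as Hps.
  - destruct (regionV_open c G0 t taus ps hc hcG Hreg) as (lo & hi & Hlh & Hopen).
    assert (Hlocal : forall y, lo < y < hi -> areaV c G0 t taus y <= areaV c G0 t taus ps).
    { intros y Hy. rewrite <- !coopA_eq_areaV by auto. apply Hmax, Hopen, Hy. }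
    pose proof (derive_0_at_interior_max _ _ _ _ _
                  (is_derive_areaV c G0 t taus ps hc hcG Hreg) Hlh Hlocal) as Hcrit.
    apply Rdiv_eq_0_num in Hcrit; lra.
  - destruct (regionVI_open c G0 t taus ps hc hcG Hreg) as (lo & hi & Hlh & Hopen).
    assert (Hlocal : forall y, lo < y < hi -> areaVI c G0 t taus y <= areaVI c G0 t taus ps).
    { intros y Hy. rewrite <- !coopA_eq_areaVI by auto. apply Hmax, Hopen, Hy. }
    pose proof (derive_0_at_interior_max _ _ _ _ _
                  (is_derive_areaVI c G0 t taus ps hc hcG Hreg) Hlh Hlocal) as Hcrit.
    apply Rdiv_eq_0_num in Hcrit; lra.
Qed.
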